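(* Let $(G,X,\Gamma)$ be a $(\mu,\nu)$-path system group, let $\eta\ge0$ and let $(g,A)$ be an $\eta$-quasi-convex element of $G$. There exists $\theta=\theta(\eta,g,A)\ge1$ such that for every $a\in A$ the orbit map $\mathbb Z\to X$, $m\mapsto g^ma$, is a $(\theta,0)$-quasi-isometric embedding, i.e. $\frac1\theta|m-n|\le d(g^ma,g^na)\le\theta|m-n|$ for all $m,n\in\mathbb Z$. Moreover $[g]^\infty>0$.
   Context: A path is a rectifiable continuous map $\alpha\colon[a,b]\to X$ parametrised by arc length; it is a $(\kappa,\lambda)$-quasi-geodesic if $d(\alpha(t),\alpha(t'))\le|t-t'|\le\kappa d(\alpha(t),\alpha(t'))+\lambda$. A $(\mu,\nu)$-path system group $(G,X,\Gamma)$ is a group $G$ acting properly by isometries on a geodesic metric space $X$ together with a $G$-invariant collection $\Gamma$ of paths closed under subpaths, such that any two points are joined by an element of $\Gamma$ and every element is a $(\mu,\nu)$-quasi-geodesic. A subset $Y$ is $\eta$-quasi-convex if every $\gamma\in\Gamma$ with endpoints in $Y$ lies in the closed $\eta$-neighbourhood of $Y$. An element $g$ is $\eta$-quasi-convex, written $(g,A)$, if $g$ has infinite order and $A\subseteq X$ is a $\langle g\rangle$-invariant $\eta$-quasi-convex subset on which $\langle g\rangle$ acts $\eta$-coboundedly (for all $a,a'\in A$ some $k\in\langle g\rangle$ has $d(a,ka')\le\eta$). The asymptotic translation length is $[g]^\infty=\limsup_{m\to\infty}\frac1m d(o,g^mo)$ for any $o\in X$. *)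

From Stdlib Require Import Reals Lra List ZArith Sorting.Sorted.
From Coquelicot Require Import Coquelicot.
Open Scope R_scope.

Record is_group {G : Type} (mul : G -> G -> G) (inv : G -> G) (one : G) : Prop := {
  g_assoc : forall x y z, mul x (mul y z) = mul (mul x y) z;
  g_idl : forall x, mul one x = x;
  g_idr : forall x, mul x one = x;
  g_invl : forall x, mul (inv x) x = one;
  g_invr : forall x, mul x (inv x) = one }.

Definition npow {G : Type} (mul : G -> G -> G) (one : G) (g : G) (n : nat) : G :=
  Nat.iter n (mul g) one.

Definition zpow {G : Type} (mul : G -> G -> G) (inv : G -> G) (one : G) (g : G) (k : Z) : G :=
  match k with
  | Z0 => one
  | Zpos p => npow mul one g (Pos.to_nat p)
  | Zneg p => inv (npow mul one g (Pos.to_nat p))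
  end.

Record is_metric {X : Type} (d : X -> X -> R) : Prop := {
  d_nonneg : forall x y, 0 <= d x y;
  d_sep : forall x y, d x y = 0 <-> x = y;
  d_sym : forall x y, d x y = d y x;
  d_tri : forall x y z, d x z <= d x y + d y z }.

Definition is_geodesic_space {X : Type} (d : X -> X -> R) : Prop :=
  forall x y, exists c : R -> X, c 0 = x /\ c (d x y) = y /\
    forall s t, 0 <= s <= d x y -> 0 <= t <= d x y -> d (c s) (c t) = Rabs (s - t).

Record is_isometric_action {G X : Type} (mul : G -> G -> G) (one : G)
    (act : G -> X -> X) (d : X -> X -> R) : Prop := {
  act_one : forall x, act one x = x;
  act_mul : forall g h x, act (mul g h) x = act g (act h x);
  act_isom : forall g x y, d (act g x) (act g y) = d x y }.

Definition is_proper_action {G X : Type} (act : G -> X -> X) (d : X -> X -> R) : Prop :=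
  forall x r, exists l : list G, forall g,
    (exists y, d x y <= r /\ d x (act g y) <= r) -> In g l.

Record path (X : Type) := mkPath { p_a : R; p_b : R; p_f : R -> X }.
Arguments mkPath {X}. Arguments p_a {X}. Arguments p_b {X}. Arguments p_f {X}.

Fixpoint chain_len {X : Type} (d : X -> X -> R) (f : R -> X) (l : list R) : R :=
  match l with
  | x :: ((y :: _) as l') => d (f x) (f y) + chain_len d f l'
  | _ => 0
  end.

Definition partition_sums {X : Type} (d : X -> X -> R) (f : R -> X) (s t : R) : R -> Prop :=
  fun v => exists pts : list R, Sorted Rle (s :: pts ++ t :: nil) /\
                                v = chain_len d f (s :: pts ++ t :: nil).

Definition continuous_on_seg {X : Type} (d : X -> X -> R) (f : R -> X) (a b : R) : Prop :=
  forall t, a <= t <= b -> forall eps, 0 < eps -> exists del, 0 < del /\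
    forall t', a <= t' <= b -> Rabs (t' - t) < del -> d (f t) (f t') < eps.

Definition arc_length_param {X : Type} (d : X -> X -> R) (f : R -> X) (a b : R) : Prop :=
  forall s t, a <= s -> s <= t -> t <= b -> is_lub (partition_sums d f s t) (t - s).

Definition is_path {X : Type} (d : X -> X -> R) (p : path X) : Prop :=
  p_a p <= p_b p /\ continuous_on_seg d (p_f p) (p_a p) (p_b p) /\
  arc_length_param d (p_f p) (p_a p) (p_b p).

Definition quasi_geodesic {X : Type} (d : X -> X -> R) (kappa lambda : R) (p : path X) : Prop :=
  forall t t', p_a p <= t <= p_b p -> p_a p <= t' <= p_b p ->
    d (p_f p t) (p_f p t') <= Rabs (t - t') /\
    Rabs (t - t') <= kappa * d (p_f p t) (p_f p t') + lambda.

Record is_path_system {G X : Type} (act : G -> X -> X) (d : X -> X -> R)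
    (Gam : path X -> Prop) (mu nu : R) : Prop := {
  ps_path : forall p, Gam p -> is_path d p;
  ps_inv : forall g p, Gam p -> Gam (mkPath (p_a p) (p_b p) (fun t => act g (p_f p t)));
  ps_sub : forall p a' b', Gam p -> p_a p <= a' -> a' <= b' -> b' <= p_b p ->
             Gam (mkPath a' b' (p_f p));
  ps_conn : forall x y, exists p, Gam p /\ p_f p (p_a p) = x /\ p_f p (p_b p) = y;
  ps_qg : forall p, Gam p -> quasi_geodesic d mu nu p }.

Definition path_system_group {G X : Type} (mul : G -> G -> G) (inv : G -> G) (one : G)
    (act : G -> X -> X) (d : X -> X -> R) (Gam : path X -> Prop) (mu nu : R) : Prop :=
  is_group mul inv one /\ is_metric d /\ is_geodesic_space d /\
  is_isometric_action mul one act d /\ is_proper_action act d /\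
  is_path_system act d Gam mu nu.

(* x lies in the closed eta-neighbourhood of Y, i.e. dist(x,Y) <= eta *)
Definition in_closed_nbhd {X : Type} (d : X -> X -> R) (Y : X -> Prop) (eta : R) (x : X) : Prop :=
  forall eps, 0 < eps -> exists y, Y y /\ d x y <= eta + eps.

Definition quasi_convex_set {X : Type} (d : X -> X -> R) (Gam : path X -> Prop)
    (eta : R) (Y : X -> Prop) : Prop :=
  forall p, Gam p -> Y (p_f p (p_a p)) -> Y (p_f p (p_b p)) ->
    forall t, p_a p <= t <= p_b p -> in_closed_nbhd d Y eta (p_f p t).

Definition quasi_convex_element {G X : Type} (mul : G -> G -> G) (inv : G -> G) (one : G)
    (act : G -> X -> X) (d : X -> X -> R) (Gam : path X -> Prop) (eta : R)
    (g : G) (A : X -> Prop) : Prop :=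
  (forall n : nat, (0 < n)%nat -> npow mul one g n <> one) /\
  (exists a, A a) /\
  (forall (k : Z) a, A a -> A (act (zpow mul inv one g k) a)) /\
  quasi_convex_set d Gam eta A /\
  (forall a a', A a -> A a' -> exists k : Z, d a (act (zpow mul inv one g k) a') <= eta).

Definition asym_transl {G X : Type} (mul : G -> G -> G) (one : G)
    (act : G -> X -> X) (d : X -> X -> R) (g : G) (o : X) : Rbar :=
  LimSup_seq (fun m => d o (act (npow mul one g m) o) / INR m).

(* The upper bound is the triangle inequality along the orbit, with the
   displacement of g bounded uniformly on A by coboundedness.  For the lower
   bound, properness and coboundedness show that only boundedly many powers g^j
   move a point of A by less than a given distance; in particular the
   displacement of every nontrivial power is bounded below.  A path of Gam from
   a to g^N a stays near A, hence near the orbit of a, so walking along it in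
   unit steps advances the orbit index by a bounded amount per step; thus |N| is
   at most linear in the length of the path, which the quasi-geodesic
   inequality bounds linearly by d(a, g^N a).  Linear growth of the orbit gives
   [g]^oo > 0. *)
From Stdlib Require Import Reals ZArith Lia Lra List Classical.
From Coquelicot Require Import Coquelicot.
Open Scope R_scope.

Lemma linear_lower_bound_of_coarse (alpha beta delta : R) :
  0 < alpha -> 0 < beta -> 0 < delta ->
  exists c, 0 < c /\ forall x D, 0 <= D -> x <= alpha * D + beta ->
    (x <> 0 -> delta <= D) -> c * x <= D.
Proof.
  intros Ha Hb Hd.
  assert (Hc : 0 < Rmin (/ (2 * alpha)) (delta / (2 * beta))).
  { apply Rmin_glb_lt; [apply Rinv_0_lt_compat | apply Rdiv_lt_0_compat]; lra. }
  exists (Rmin (/ (2 * alpha)) (delta / (2 * beta))). split; [exact Hc|].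
  intros x D HD Hcoarse Hpos.
  destruct (Rle_lt_dec x 0) as [Hx0|Hx0]; [nra|].
  destruct (Rle_lt_dec (2 * beta) x) as [Hbig|Hsmall].
  - apply Rle_trans with (/ (2 * alpha) * x).
    + apply Rmult_le_compat_r; [lra | apply Rmin_l].
    + apply (Rmult_le_reg_l (2 * alpha)); [lra|].
      rewrite <- Rmult_assoc, Rinv_r by lra. lra.
  - specialize (Hpos ltac:(lra)).
    apply Rle_trans with (delta / (2 * beta) * x).
    + apply Rmult_le_compat_r; [lra | apply Rmin_r].
    + unfold Rdiv. apply Rle_trans with delta; [|exact Hpos].
      apply (Rmult_le_reg_l (2 * beta)); [lra|].
      replace (2 * beta * (delta * / (2 * beta) * x))
        with (delta * x * ((2 * beta) * / (2 * beta))) by ring.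
      rewrite Rinv_r by lra. nra.
Qed.

Lemma LimSup_div_INR_pos (u : nat -> R) (c e : R) : 0 < c ->
  (forall m, c * INR m - e <= u m) ->
  Rbar_lt (Finite 0) (LimSup_seq (fun m => u m / INR m)).
Proof.
  intros Hc Hu.
  destruct (INR_archimed (c / 2) (2 * e)) as [M HM]; [lra|].
  apply Rbar_lt_le_trans with (Finite (c / 2)); [simpl; lra|].
  rewrite <- (LimSup_seq_const (c / 2)).
  apply LimSup_le. exists (S M). intros m Hm.
  assert (Hm0 : 0 < INR m) by (apply lt_0_INR; lia).
  assert (HMm : INR M <= INR m) by (apply le_INR; lia).
  apply (Rmult_le_reg_r (INR m)); [exact Hm0|].
  unfold Rdiv at 2. rewrite Rmult_assoc, Rinv_l, Rmult_1_r by lra.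
  specialize (Hu m). nra.
Qed.

Section GroupPowers.
Variables (G : Type) (mul : G -> G -> G) (inv : G -> G) (one : G).
Hypothesis HG : is_group mul inv one.
Variable g : G.

Local Notation npw := (npow mul one g).
Local Notation zpw := (zpow mul inv one g).

Lemma inv_mul x y : inv (mul x y) = mul (inv y) (inv x).
Proof.
  destruct HG as [As Il Ir Vl Vr].
  assert (Hright : mul (mul x y) (mul (inv y) (inv x)) = one).
  { rewrite <- As, (As y), Vr, Il. apply Vr. }
  transitivity (mul (inv (mul x y)) (mul (mul x y) (mul (inv y) (inv x)))).
  - rewrite Hright, Ir; reflexivity.
  - rewrite As, Vl, Il; reflexivity.
Qed.

Lemma inv_one : inv one = one.
Proof. destruct HG as [_ _ Ir Vl _]. rewrite <- (Vl one) at 2. now rewrite Ir. Qed.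

Lemma npow_add m n : npw (m + n) = mul (npw m) (npw n).
Proof.
  destruct HG as [As Il _ _ _].
  induction m as [|m IH]; simpl; [now rewrite Il|].
  change (mul g (npw (m + n)) = mul (mul g (npw m)) (npw n)).
  now rewrite IH, As.
Qed.

Lemma npow_succ_r n : npw (S n) = mul (npw n) g.
Proof.
  replace (S n) with (n + 1)%nat by lia. rewrite npow_add.
  destruct HG as [_ _ Ir _ _]. simpl. now rewrite Ir.
Qed.

Lemma zpow_of_nat n : zpw (Z.of_nat n) = npw n.
Proof. destruct n; [reflexivity|]. simpl. now rewrite SuccNat2Pos.id_succ. Qed.

Lemma zpow_opp_of_nat n : zpw (- Z.of_nat n) = inv (npw n).
Proof.
  destruct n; simpl; [now rewrite inv_one|]. now rewrite SuccNat2Pos.id_succ.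
Qed.

Lemma zpow_succ k : zpw (Z.succ k) = mul g (zpw k).
Proof.
  destruct HG as [As Il _ _ Vr].
  destruct k as [|p|p]; [reflexivity| |].
  - replace (Z.succ (Zpos p)) with (Z.of_nat (S (Pos.to_nat p))) by lia.
    now rewrite zpow_of_nat.
  - destruct (Pos.to_nat p) as [|n] eqn:En; [lia|].
    replace (Zneg p) with (- Z.of_nat (S n))%Z by lia.
    replace (Z.succ (- Z.of_nat (S n))) with (- Z.of_nat n)%Z by lia.
    now rewrite !zpow_opp_of_nat, npow_succ_r, inv_mul, As, Vr, Il.
Qed.

Lemma zpow_pred k : zpw (Z.pred k) = mul (inv g) (zpw k).
Proof.
  destruct HG as [As Il _ Vl _].
  rewrite <- (Z.succ_pred k) at 2. now rewrite zpow_succ, As, Vl, Il.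
Qed.

Lemma zpow_add i j : zpw (i + j) = mul (zpw i) (zpw j).
Proof.
  destruct HG as [As Il _ _ _].
  induction i using Z.peano_ind.
  - simpl. now rewrite Il.
  - now rewrite Z.add_succ_l, !zpow_succ, IHi, As.
  - now rewrite Z.add_pred_l, !zpow_pred, IHi, As.
Qed.

Hypothesis Hinf : forall n : nat, (0 < n)%nat -> npw n <> one.

Lemma zpow_eq_one k : zpw k = one -> k = 0%Z.
Proof.
  destruct HG as [_ _ Ir _ Vr].
  intros H. destruct k as [|p|p]; [reflexivity| |]; exfalso; unfold zpow in H.
  - apply (Hinf (Pos.to_nat p)); [lia | exact H].
  - apply (Hinf (Pos.to_nat p)); [lia|].
    transitivity (mul (npw (Pos.to_nat p)) (inv (npw (Pos.to_nat p)))).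
    + now rewrite H, Ir.
    + apply Vr.
Qed.

Lemma zpow_inj i j : zpw i = zpw j -> i = j.
Proof.
  destruct HG as [As _ Ir _ Vr].
  intros H.
  assert (Hdiff : zpw (i - j) = one).
  { assert (Hshift : zpw i = mul (zpw (i - j)) (zpw i)).
    { rewrite H at 2. rewrite <- zpow_add. f_equal. lia. }
    transitivity (mul (mul (zpw (i - j)) (zpw i)) (inv (zpw i))).
    - now rewrite <- As, Vr, Ir.
    - now rewrite <- Hshift, Vr. }
  apply zpow_eq_one in Hdiff. lia.
Qed.

Lemma zpow_in_list_bounded (l : list G) :
  exists K, forall j, In (zpw j) l -> (Z.abs j <= K)%Z.
Proof.
  induction l as [|x l [K IH]].
  - exists 0%Z. intros j [].
  - destruct (classic (exists j, zpw j = x)) as [[j0 Hj0]|Hnone].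
    + exists (Z.max K (Z.abs j0)). intros j [Hj|Hj].
      * assert (j = j0) by (apply zpow_inj; congruence). subst. lia.
      * specialize (IH j Hj). lia.
    + exists K. intros j [Hj|Hj]; [exfalso; eauto | auto].
Qed.

End GroupPowers.

Section Orbits.
Variables (G X : Type) (mul : G -> G -> G) (inv : G -> G) (one : G)
  (act : G -> X -> X) (d : X -> X -> R) (g : G).
Hypotheses (HG : is_group mul inv one) (HM : is_metric d)
  (HA : is_isometric_action mul one act d).

Local Notation zpw := (zpow mul inv one g).
Let dist_tri := d_tri d HM.
Let dist_sym := d_sym d HM.

Lemma dist_self x : d x x = 0.
Proof. now apply (d_sep d HM). Qed.

Lemma act_zpow_add i j x : act (zpw i) (act (zpw j) x) = act (zpw (i + j)) x.
Proof. now rewrite (zpow_add _ _ _ _ HG), (act_mul _ _ _ _ HA). Qed.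

Lemma act_zpow0 x : act (zpw 0) x = x.
Proof. apply (act_one _ _ _ _ HA). Qed.

Lemma orbit_dist_shift m n a :
  d (act (zpw m) a) (act (zpw n) a) = d a (act (zpw (n - m)) a).
Proof.
  replace (act (zpw n) a) with (act (zpw m) (act (zpw (n - m)) a)).
  - apply (act_isom _ _ _ _ HA).
  - rewrite act_zpow_add. do 3 f_equal. lia.
Qed.

Lemma orbit_dist_translate k j a :
  d (act (zpw k) a) (act (zpw j) (act (zpw k) a)) = d a (act (zpw j) a).
Proof. rewrite act_zpow_add, orbit_dist_shift. do 3 f_equal. lia. Qed.

Lemma orbit_dist_abs a j : d a (act (zpw j) a) = d a (act (zpw (Z.abs j)) a).
Proof.
  destruct (Z.abs_eq_or_opp j) as [E|E]; rewrite E; [reflexivity|].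
  pose proof (orbit_dist_shift j 0 a) as Hshift. rewrite act_zpow0 in Hshift.
  now rewrite dist_sym, Hshift.
Qed.

Lemma orbit_dist_mul_le a N (n : nat) :
  d a (act (zpw (Z.of_nat n * N)) a) <= INR n * d a (act (zpw N) a).
Proof.
  induction n as [|n IH].
  - simpl. rewrite act_zpow0, dist_self. lra.
  - rewrite Nat2Z.inj_succ, Z.mul_succ_l, S_INR.
    eapply Rle_trans; [apply (dist_tri _ (act (zpw (Z.of_nat n * N)) a))|].
    rewrite orbit_dist_shift.
    replace (Z.of_nat n * N + N - Z.of_nat n * N)%Z with N by lia. lra.
Qed.

Lemma orbit_dist_change_base o a k :
  d a (act (zpw k) a) - 2 * d o a <= d o (act (zpw k) o).
Proof.
  pose proof (dist_tri a o (act (zpw k) a)) as H1.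
  pose proof (dist_tri o (act (zpw k) o) (act (zpw k) a)) as H2.
  rewrite (act_isom _ _ _ _ HA) in H2. rewrite (dist_sym a o) in H1. lra.
Qed.

Lemma orbit_index_walk a r K (x : nat -> X) :
  0 <= r ->
  (forall j, d a (act (zpw j) a) <= 2 * r + 1 -> (Z.abs j <= K)%Z) ->
  x O = a -> (forall i, d (x i) (x (S i)) <= 1) ->
  (forall i, exists k, d (x i) (act (zpw k) a) <= r) ->
  forall i, exists k, (Z.abs k <= Z.of_nat i * K)%Z /\ d (x i) (act (zpw k) a) <= r.
Proof.
  intros Hr Hret Hx0 Hstep Hnear i.
  induction i as [|i [k [Hk Hxk]]].
  - exists 0%Z. split; [lia|]. now rewrite Hx0, act_zpow0, dist_self.
  - destruct (Hnear (S i)) as [k' Hxk'].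
    exists k'. split; [|exact Hxk'].
    assert (Hjump : d a (act (zpw (k' - k)) a) <= 2 * r + 1).
    { rewrite <- orbit_dist_shift.
      eapply Rle_trans; [apply (dist_tri _ (x i))|]. rewrite dist_sym.
      eapply Rle_trans; [apply Rplus_le_compat_l, (dist_tri _ (x (S i)))|].
      specialize (Hstep i). lra. }
    specialize (Hret _ Hjump). lia.
Qed.

Section QuasiConvexElement.
Variables (Gam : path X -> Prop) (mu nu eta : R) (A : X -> Prop) (a0 : X).
Hypotheses (Heta : 0 <= eta) (Ha0 : A a0)
  (Hinf : forall n : nat, (0 < n)%nat -> npow mul one g n <> one)
  (Hproper : is_proper_action act d)
  (HS : is_path_system act d Gam mu nu)
  (Hinv : forall k a, A a -> A (act (zpw k) a))
  (Hqc : quasi_convex_set d Gam eta A)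
  (Hcobd : forall a a', A a -> A a' -> exists k, d a (act (zpw k) a') <= eta).

Lemma orbit_returns_bounded D : 0 <= D -> exists K, (0 <= K)%Z /\
  forall a, A a -> forall j, d a (act (zpw j) a) <= D -> (Z.abs j <= K)%Z.
Proof.
  intros HD.
  destruct (Hproper a0 (eta + D)) as [l Hl].
  destruct (zpow_in_list_bounded _ _ _ _ HG g Hinf l) as [K HK].
  exists (Z.max K 0). split; [lia|].
  intros a Ha j Hj.
  enough (Hin : In (zpw j) l) by (specialize (HK j Hin); lia).
  apply Hl.
  destruct (Hcobd a0 a Ha0 Ha) as [k Hk].
  exists (act (zpw k) a). split; [lra|].
  eapply Rle_trans; [apply (dist_tri _ (act (zpw k) a))|].
  rewrite orbit_dist_translate. lra.
Qed.

Lemma orbit_displacement_pos : exists delta, 0 < delta /\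
  forall a, A a -> forall N, N <> 0%Z -> delta <= d a (act (zpw N) a).
Proof.
  destruct (orbit_returns_bounded 1) as [K [HK Hret]]; [lra|].
  assert (HKR : 0 <= IZR K) by (apply IZR_le; lia).
  exists (/ (IZR K + 1)). split; [apply Rinv_0_lt_compat; lra|].
  intros a Ha N HN. apply Rnot_lt_le. intros Hsmall.
  (* Otherwise g^((K+1)N) would move [a] by at most 1 although (K+1)N exceeds K. *)
  set (m := Z.to_nat (K + 1)).
  assert (Hm : INR m = IZR K + 1).
  { unfold m. rewrite INR_IZR_INZ, Z2Nat.id, plus_IZR by lia. reflexivity. }
  assert (Hclose : d a (act (zpw (Z.of_nat m * N)) a) <= 1).
  { eapply Rle_trans; [apply orbit_dist_mul_le|]. rewrite Hm.
    apply (Rmult_lt_compat_l (IZR K + 1)) in Hsmall; [|lra].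
    rewrite Rinv_r in Hsmall by lra. lra. }
  specialize (Hret a Ha _ Hclose).
  replace (Z.of_nat m) with (K + 1)%Z in Hret by (unfold m; lia).
  rewrite Z.abs_mul in Hret. nia.
Qed.

Lemma orbit_dist_le_linear : exists C, 0 <= C /\
  forall a, A a -> forall j, d a (act (zpw j) a) <= C * IZR (Z.abs j).
Proof.
  exists (2 * eta + d a0 (act (zpw 1) a0)).
  split; [pose proof (d_nonneg d HM a0 (act (zpw 1) a0)); lra|].
  intros a Ha j.
  assert (Hstep : d a (act (zpw 1) a) <= 2 * eta + d a0 (act (zpw 1) a0)).
  { destruct (Hcobd a a0 Ha Ha0) as [k Hk].
    eapply Rle_trans; [apply (dist_tri _ (act (zpw k) a0))|].
    eapply Rle_trans;
      [apply Rplus_le_compat_l, (dist_tri _ (act (zpw 1) (act (zpw k) a0)))|].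
    rewrite orbit_dist_translate, (act_isom _ _ _ _ HA), (dist_sym (act (zpw k) a0) a).
    lra. }
  rewrite orbit_dist_abs.
  pose proof (orbit_dist_mul_le a 1 (Z.abs_nat j)) as Hmul.
  replace (Z.of_nat (Z.abs_nat j) * 1)%Z with (Z.abs j) in Hmul by lia.
  rewrite INR_IZR_INZ, Zabs2Nat.id_abs in Hmul.
  assert (0 <= IZR (Z.abs j)) by (apply IZR_le; lia).
  nra.
Qed.

Lemma path_near_orbit a p : A a -> Gam p -> A (p_f p (p_a p)) -> A (p_f p (p_b p)) ->
  forall t, p_a p <= t <= p_b p -> exists k, d (p_f p t) (act (zpw k) a) <= 2 * eta + 1.
Proof.
  intros Ha Hp Hstart Hend t Ht.
  destruct (Hqc p Hp Hstart Hend t Ht 1 ltac:(lra)) as [y [Hy Hyd]].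
  destruct (Hcobd y a Hy Ha) as [k Hk]. exists k.
  eapply Rle_trans; [apply (dist_tri _ y)|]. lra.
Qed.

Lemma orbit_index_le_path_length : exists K, 0 <= K /\
  forall a N p, A a -> Gam p -> p_f p (p_a p) = a -> p_f p (p_b p) = act (zpw N) a ->
  IZR (Z.abs N) <= K * (p_b p - p_a p + 2).
Proof.
  destruct (orbit_returns_bounded (4 * eta + 3)) as [K [HK Hret]]; [lra|].
  exists (IZR K). split; [apply IZR_le; lia|].
  intros a N p Ha Hp Hpa Hpb.
  destruct (ps_path _ _ _ _ _ HS p Hp) as [Hab _].
  pose proof (ps_qg _ _ _ _ _ HS p Hp) as Hqg.
  set (s := fun i : nat => Rmin (p_a p + INR i) (p_b p)).
  assert (Hs : forall i, p_a p <= s i <= p_b p).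
  { intros i. unfold s, Rmin. pose proof (pos_INR i). destruct Rle_dec; lra. }
  assert (Hstep : forall i, d (p_f p (s i)) (p_f p (s (S i))) <= 1).
  { intros i. destruct (Hqg (s i) (s (S i)) (Hs i) (Hs (S i))) as [Hq _].
    eapply Rle_trans; [exact Hq|].
    unfold s, Rmin. rewrite S_INR. pose proof (pos_INR i).
    destruct Rle_dec; destruct Rle_dec; unfold Rabs; destruct Rcase_abs; lra. }
  assert (Hwalk := orbit_index_walk a (2 * eta + 1) K (fun i => p_f p (s i))
    ltac:(lra) ltac:(intros j Hj; apply (Hret a Ha); lra)).
  destruct (archimed (p_b p - p_a p)) as [Hup1 Hup2].
  set (n := Z.to_nat (up (p_b p - p_a p))).
  assert (Hup : (0 < up (p_b p - p_a p))%Z) by (apply lt_IZR; lra).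
  assert (Hn : INR n = IZR (up (p_b p - p_a p))).
  { unfold n. rewrite INR_IZR_INZ, Z2Nat.id by lia. reflexivity. }
  assert (Hsn : s n = p_b p) by (unfold s; rewrite Rmin_right; lra).
  destruct (Hwalk ltac:(unfold s; simpl; rewrite Rplus_0_r, Rmin_left; auto)
    Hstep (fun i => path_near_orbit a p Ha Hp ltac:(now rewrite Hpa)
                      ltac:(now rewrite Hpb; apply Hinv) (s i) (Hs i)) n)
    as [k [Hk Hnear]].
  rewrite Hsn, Hpb in Hnear.
  assert (HNk : (Z.abs (N - k) <= K)%Z).
  { apply (Hret a Ha). rewrite <- orbit_dist_shift, dist_sym. lra. }
  assert (HZ : (Z.abs N <= (Z.of_nat n + 1) * K)%Z) by lia.
  apply IZR_le in HZ. rewrite mult_IZR, plus_IZR, <- INR_IZR_INZ, Hn in HZ.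
  assert (0 <= IZR K) by (apply IZR_le; lia).
  nra.
Qed.

Lemma orbit_index_coarse_le : exists alpha beta, 0 < alpha /\ 0 < beta /\
  forall a, A a -> forall N, IZR (Z.abs N) <= alpha * d a (act (zpw N) a) + beta.
Proof.
  destruct orbit_index_le_path_length as [K [HK Hlen]].
  exists ((K + 1) * Rmax mu 1), ((K + 1) * (Rabs nu + 2)).
  pose proof (Rmax_r mu 1) as Hmu. pose proof (Rabs_pos nu) as Hnu.
  split; [nra|]. split; [nra|].
  intros a Ha N.
  destruct (ps_conn _ _ _ _ _ HS a (act (zpw N) a)) as [p [Hp [Hpa Hpb]]].
  destruct (ps_path _ _ _ _ _ HS p Hp) as [Hab _].
  specialize (Hlen a N p Ha Hp Hpa Hpb).
  destruct (ps_qg _ _ _ _ _ HS p Hp (p_a p) (p_b p)) as [_ Hq]; try lra.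
  rewrite Hpa, Hpb, Rabs_minus_sym, Rabs_right in Hq by lra.
  pose proof (d_nonneg d HM a (act (zpw N) a)) as HD.
  pose proof (Rmax_l mu 1). pose proof (Rle_abs nu).
  assert (mu * d a (act (zpw N) a) <= Rmax mu 1 * d a (act (zpw N) a)) by nra.
  nra.
Qed.

Lemma orbit_dist_ge_linear : exists c, 0 < c /\
  forall a, A a -> forall N, c * IZR (Z.abs N) <= d a (act (zpw N) a).
Proof.
  destruct orbit_index_coarse_le as [alpha [beta [Halpha [Hbeta Hcoarse]]]].
  destruct orbit_displacement_pos as [delta [Hdelta Hpos]].
  destruct (linear_lower_bound_of_coarse alpha beta delta Halpha Hbeta Hdelta)
    as [c [Hc Hlin]].
  exists c. split; [exact Hc|].
  intros a Ha N. apply Hlin.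
  - apply (d_nonneg d HM).
  - now apply Hcoarse.
  - intros HN. apply (Hpos a Ha). intros ->. now apply HN.
Qed.

Lemma asym_transl_pos o : Rbar_lt (Finite 0) (asym_transl mul one act d g o).
Proof.
  destruct orbit_dist_ge_linear as [c [Hc Hlin]].
  apply (LimSup_div_INR_pos _ c (2 * d o a0) Hc). intros m.
  rewrite <- (zpow_of_nat _ mul inv one g m).
  eapply Rle_trans; [|apply orbit_dist_change_base with (a := a0)].
  specialize (Hlin a0 Ha0 (Z.of_nat m)).
  replace (Z.abs (Z.of_nat m)) with (Z.of_nat m) in Hlin by lia.
  rewrite <- INR_IZR_INZ in Hlin. lra.
Qed.

End QuasiConvexElement.
End Orbits.

Theorem mainTheorem13 (G X : Type) (mul : G -> G -> G) (inv : G -> G) (one : G)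
    (act : G -> X -> X) (d : X -> X -> R) (Gam : path X -> Prop)
    (mu nu eta : R) (g : G) (A : X -> Prop) :
  path_system_group mul inv one act d Gam mu nu ->
  0 <= eta ->
  quasi_convex_element mul inv one act d Gam eta g A ->
  (exists theta : R, 1 <= theta /\
     forall a, A a -> forall m n : Z,
       / theta * Rabs (IZR (m - n)) <=
         d (act (zpow mul inv one g m) a) (act (zpow mul inv one g n) a) /\
       d (act (zpow mul inv one g m) a) (act (zpow mul inv one g n) a) <=
         theta * Rabs (IZR (m - n))) /\
  (forall o : X, Rbar_lt (Finite 0) (asym_transl mul one act d g o)).
Proof.
  intros [HG [HM [_ [HA [Hproper HS]]]]] Heta [Hinf [[a0 Ha0] [Hinv [Hqc Hcobd]]]].
  split; [|intros o; eapply asym_transl_pos; eassumption].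
  edestruct orbit_dist_ge_linear as [c [Hc Hlow]]; try eassumption.
  edestruct orbit_dist_le_linear as [C [HC Hup]]; try eassumption.
  set (theta := Rmax 1 (Rmax C (/ c))).
  assert (HC' : C <= theta) by (eapply Rle_trans; [apply Rmax_l | apply Rmax_r]).
  assert (Hc' : / theta <= c).
  { rewrite <- (Rinv_inv c). apply Rinv_le_contravar; [now apply Rinv_0_lt_compat|].
    eapply Rle_trans; [apply Rmax_r | apply Rmax_r]. }
  exists theta. split; [apply Rmax_l|]. intros a Ha m n.
  rewrite (orbit_dist_shift _ _ _ _ _ _ _ _ HG HA), Rabs_Zabs.
  replace (Z.abs (m - n)) with (Z.abs (n - m)) by lia.
  pose proof (IZR_le _ _ (Z.abs_nonneg (n - m))).
  specialize (Hlow a Ha (n - m)%Z). specialize (Hup a Ha (n - m)%Z).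
  split; nra.
Qed.
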